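(* Let $\mathbb T=\mathbb R/\mathbb Z$ be the circle group and $g_1,g_2\in\mathbb T$. Then $g_1$ and $g_2$ are induced conjugated if and only if either (i) $g_1$ and $g_2$ both have finite order and their orders are equal, or (ii) $g_1=\pm g_2$.
   Context: Elements $g_1,g_2$ of a topological group $G$ are induced conjugated if there exist a topological group $H$ containing $G$ as a topological subgroup and $t\in H$ with $tg_1t^{-1}=g_2$. *)

From Stdlib Require Import Reals.
Open Scope R_scope.

Record TopGroup := {
  tg_car :> Type;
  tg_mul : tg_car -> tg_car -> tg_car;
  tg_one : tg_car;
  tg_inv : tg_car -> tg_car;
  tg_assoc : forall x y z, tg_mul x (tg_mul y z) = tg_mul (tg_mul x y) z;
  tg_mul1l : forall x, tg_mul tg_one x = x;
  tg_mul1r : forall x, tg_mul x tg_one = x;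
  tg_mulVl : forall x, tg_mul (tg_inv x) x = tg_one;
  tg_mulVr : forall x, tg_mul x (tg_inv x) = tg_one;
  tg_open : (tg_car -> Prop) -> Prop;
  tg_open_full : tg_open (fun _ => True);
  tg_open_inter : forall U V, tg_open U -> tg_open V ->
      tg_open (fun x => U x /\ V x);
  tg_open_union : forall F : (tg_car -> Prop) -> Prop,
      (forall U, F U -> tg_open U) -> tg_open (fun x => exists U, F U /\ U x);
  tg_mul_cont : forall W x y, tg_open W -> W (tg_mul x y) ->
      exists U V, tg_open U /\ tg_open V /\ U x /\ V y /\
        (forall a b, U a -> V b -> W (tg_mul a b));
  tg_inv_cont : forall W, tg_open W -> tg_open (fun x => W (tg_inv x))
}.

(* A group G (given by its operation and its family of open sets) is a
   topological subgroup of H via i : i is an injective homomorphism which is a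
   homeomorphism onto its image (with the subspace topology). *)
Definition top_embedding {G : Type} (Gmul : G -> G -> G)
    (Gopen : (G -> Prop) -> Prop) (H : TopGroup) (i : G -> H) : Prop :=
  (forall x y, i (Gmul x y) = tg_mul H (i x) (i y)) /\
  (forall x y, i x = i y -> x = y) /\
  (forall V, tg_open H V -> Gopen (fun x => V (i x))) /\
  (forall U, Gopen U -> exists V, tg_open H V /\ forall x, U x <-> V (i x)).

Definition induced_conjugated {G : Type} (Gmul : G -> G -> G)
    (Gopen : (G -> Prop) -> Prop) (g1 g2 : G) : Prop :=
  exists (H : TopGroup) (i : G -> H), top_embedding Gmul Gopen H i /\
    exists t : H, tg_mul H (tg_mul H t (i g1)) (tg_inv H t) = i g2.

(* Elements represented by their unique representative in [0,1). *)
Definition circle := { x : R | 0 <= x < 1 }.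

Lemma frac_part_range (r : R) : 0 <= frac_part r < 1.
Proof. destruct (base_fp r) as [H1 H2]. split; [apply Rge_le; exact H1 | exact H2]. Qed.

Definition circle_proj (r : R) : circle :=
  exist _ (frac_part r) (frac_part_range r).

Definition circle_add (x y : circle) : circle := circle_proj (proj1_sig x + proj1_sig y).
Definition circle_zero : circle := circle_proj 0.
Definition circle_opp (x : circle) : circle := circle_proj (- proj1_sig x).

Definition circle_open (U : circle -> Prop) : Prop :=
  open_set (fun r : R => U (circle_proj r)).

Fixpoint circle_nmul (n : nat) (x : circle) : circle :=
  match n with
  | O => circle_zero
  | S m => circle_add x (circle_nmul m x)
  end.

Definition circle_order (x : circle) (n : nat) : Prop :=
  (0 < n)%nat /\ circle_nmul n x = circle_zero /\
  (forall m, (0 < m < n)%nat -> circle_nmul m x <> circle_zero).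

(** Sufficiency: if continuous endomorphisms e1, e2 of T exchange g1 and g2,
    then T embeds in H = T^Z ⋊ Z (shift action, product topology) through
    x |-> (e1^j x)_(j>=0), (e2^(-j) x)_(j<0), and the shift conjugates the
    image of g1 to that of g2.  Same finite order gives e1, e2 of the form
    x |-> k x; g1 = ± g2 gives e1 = e2 = ± id.

    Necessity: conjugation by t is a homomorphism, so g1, g2 have the same
    annihilating integers.  For infinite order, the representatives a, b are
    irrational and continuity of conjugation says that n a -> 0 in T forces
    n b -> 0.  Lifting n a |-> n b near 0 to an additive map of small reals,
    density of the multiples of a makes it linear of integer slope, so b = K a
    in T; symmetrically a = L b, hence L K = 1 and g1 = ± g2. *)

From Stdlib Require Import Reals Lra Lia ZArith Znumtheory List Classical
  ProofIrrelevance FunctionalExtensionality PropExtensionality.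
Open Scope R_scope.

Definition congZ (x y : R) : Prop := exists z : Z, x - y = IZR z.

Lemma congZ_sym x y : congZ x y -> congZ y x.
Proof. intros [z H]; exists (- z)%Z; rewrite opp_IZR; lra. Qed.

Lemma congZ_trans x y w : congZ x y -> congZ y w -> congZ x w.
Proof. intros [z H] [z' H']; exists (z + z')%Z; rewrite plus_IZR; lra. Qed.

Lemma congZ_add x y x' y' : congZ x x' -> congZ y y' -> congZ (x + y) (x' + y').
Proof. intros [z H] [z' H']; exists (z + z')%Z; rewrite plus_IZR; lra. Qed.

Lemma congZ_opp x y : congZ x y -> congZ (- x) (- y).
Proof. intros [z H]; exists (- z)%Z; rewrite opp_IZR; lra. Qed.

Lemma congZ_mulZ (m : Z) x y : congZ x y -> congZ (IZR m * x) (IZR m * y).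
Proof. intros [z H]; exists (m * z)%Z; rewrite mult_IZR, <- H; ring. Qed.

Lemma congZ_small_eq y y' : congZ y y' -> Rabs y < 1/2 -> Rabs y' < 1/2 -> y = y'.
Proof.
  intros [z Hz] H1 H2. apply Rabs_def2 in H1. apply Rabs_def2 in H2.
  assert (Hz' : -1 < IZR z < 1) by lra.
  assert (z = 0%Z) by (destruct Hz'; apply lt_IZR in H, H0; simpl in *; lia).
  subst z. simpl in Hz. lra.
Qed.

Lemma Int_part_unique r z : IZR z <= r < IZR z + 1 -> Int_part r = z.
Proof.
  intros [H1 H2]. unfold Int_part.
  assert (E : (z + 1)%Z = up r) by (apply tech_up; rewrite plus_IZR; simpl; lra).
  lia.
Qed.

Lemma frac_congZ r : congZ (frac_part r) r.
Proof. unfold frac_part. exists (- Int_part r)%Z. rewrite opp_IZR; ring. Qed.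

Lemma frac_of_congZ x y : congZ x y -> frac_part x = frac_part y.
Proof.
  intros [z H]. unfold frac_part.
  assert (E : Int_part x = (Int_part y + z)%Z).
  { apply Int_part_unique. destruct (base_Int_part y). rewrite plus_IZR. lra. }
  rewrite E, plus_IZR. lra.
Qed.

Lemma floor_multiple x t : 0 < t -> exists q : Z, IZR q * t <= x < IZR q * t + t.
Proof.
  intros Ht. exists (Int_part (x / t)). destruct (base_Int_part (x / t)) as [B1 B2].
  set (q := Int_part (x / t)) in *. unfold Rdiv in B1, B2.
  split.
  - apply Rmult_le_reg_r with (/ t); [apply Rinv_0_lt_compat; lra|].
    replace (IZR q * t * / t) with (IZR q) by (field; lra). lra.
  - apply Rmult_lt_reg_r with (/ t); [apply Rinv_0_lt_compat; lra|].
    replace ((IZR q * t + t) * / t) with (IZR q + 1) by (field; lra). lra.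
Qed.

Definition near_int (r e : R) : Prop := exists z : Z, Rabs (r - IZR z) < e.

Lemma near_int_congZ r s e : congZ r s -> near_int r e -> near_int s e.
Proof.
  intros [z H] [w Hw]. exists (w - z)%Z. rewrite minus_IZR.
  replace (s - (IZR w - IZR z)) with (r - IZR w) by lra. exact Hw.
Qed.

Lemma near_int_of_congZ x r e : congZ x r -> Rabs x < e -> near_int r e.
Proof.
  intros Hx H. apply (near_int_congZ x); auto. exists 0%Z. rewrite Rminus_0_r. exact H.
Qed.

Lemma near_int_add r s e1 e2 : near_int r e1 -> near_int s e2 -> near_int (r + s) (e1 + e2).
Proof.
  intros [z H] [w Hw]. exists (z + w)%Z. rewrite plus_IZR.
  replace (r + s - (IZR z + IZR w)) with ((r - IZR z) + (s - IZR w)) by ring.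
  eapply Rle_lt_trans; [apply Rabs_triang | lra].
Qed.

Lemma near_int_opp r e : near_int r e -> near_int (- r) e.
Proof.
  intros [z H]. exists (- z)%Z. rewrite opp_IZR.
  replace (- r - - IZR z) with (- (r - IZR z)) by ring. rewrite Rabs_Ropp. exact H.
Qed.

Lemma near_int_mono r e e' : e <= e' -> near_int r e -> near_int r e'.
Proof. intros He [z H]; exists z; lra. Qed.

Lemma near_int_0 e : 0 < e -> near_int 0 e.
Proof. intros He; exists 0%Z. simpl. rewrite Rminus_0_r, Rabs_R0. exact He. Qed.

Lemma near_int_nat (k : nat) r e : 0 < e -> near_int r e ->
  near_int (INR k * r) ((INR k + 1) * e).
Proof.
  intros He [z H]. exists (Z.of_nat k * z)%Z. rewrite mult_IZR, <- INR_IZR_INZ.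
  replace (INR k * r - INR k * IZR z) with (INR k * (r - IZR z)) by ring.
  rewrite Rabs_mult, (Rabs_pos_eq (INR k)) by apply pos_INR.
  pose proof (pos_INR k). nra.
Qed.

Lemma circle_eq (c d : circle) : proj1_sig c = proj1_sig d -> c = d.
Proof.
  destruct c as [x Hx], d as [y Hy]; simpl; intros ->. f_equal. apply proof_irrelevance.
Qed.

Lemma val_proj r : congZ (proj1_sig (circle_proj r)) r.
Proof. apply frac_congZ. Qed.

Lemma proj_val c : circle_proj (proj1_sig c) = c.
Proof.
  apply circle_eq. destruct c as [x Hx]; simpl. unfold frac_part.
  rewrite (Int_part_unique x 0); simpl; lra.
Qed.

Lemma proj_surj c : exists r, c = circle_proj r.
Proof. exists (proj1_sig c). symmetry; apply proj_val. Qed.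

Lemma proj_eq x y : circle_proj x = circle_proj y <-> congZ x y.
Proof.
  split.
  - intros H. apply (f_equal (@proj1_sig _ _)) in H.
    apply congZ_trans with (proj1_sig (circle_proj x)); [apply congZ_sym, val_proj|].
    rewrite H. apply val_proj.
  - intros H. apply circle_eq. simpl. apply frac_of_congZ. exact H.
Qed.

Lemma add_proj x y : circle_add (circle_proj x) (circle_proj y) = circle_proj (x + y).
Proof. apply proj_eq. apply congZ_add; apply val_proj. Qed.

Lemma opp_proj x : circle_opp (circle_proj x) = circle_proj (- x).
Proof. apply proj_eq. apply congZ_opp; apply val_proj. Qed.

Lemma nmul_proj n x : circle_nmul n (circle_proj x) = circle_proj (INR n * x).
Proof.
  induction n as [|n IH]; simpl circle_nmul.
  - apply proj_eq. exists 0%Z. simpl; ring.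
  - rewrite IH, add_proj, S_INR. f_equal; ring.
Qed.

Lemma nmul_zero_iff n a : circle_nmul n (circle_proj a) = circle_zero <-> congZ (INR n * a) 0.
Proof. rewrite nmul_proj. apply proj_eq. Qed.

Ltac circle_reals := repeat match goal with
  | c : circle |- _ => let r := fresh "r" in destruct (proj_surj c) as [r ->]; clear c
  end.

Lemma cadd_assoc x y w : circle_add x (circle_add y w) = circle_add (circle_add x y) w.
Proof. circle_reals. rewrite !add_proj. f_equal; ring. Qed.

Lemma cadd_0_l x : circle_add circle_zero x = x.
Proof. circle_reals. unfold circle_zero. rewrite add_proj. f_equal; ring. Qed.

Lemma cadd_0_r x : circle_add x circle_zero = x.
Proof. circle_reals. unfold circle_zero. rewrite add_proj. f_equal; ring. Qed.

Lemma cadd_opp_r x : circle_add x (circle_opp x) = circle_zero.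
Proof. circle_reals. unfold circle_zero. rewrite opp_proj, add_proj. f_equal; ring. Qed.

Lemma cadd_opp_l x : circle_add (circle_opp x) x = circle_zero.
Proof. circle_reals. unfold circle_zero. rewrite opp_proj, add_proj. f_equal; ring. Qed.

Lemma copp_0 : circle_opp circle_zero = circle_zero.
Proof. unfold circle_zero. rewrite opp_proj. f_equal; ring. Qed.

Lemma copp_opp x : circle_opp (circle_opp x) = x.
Proof. circle_reals. rewrite !opp_proj. f_equal; ring. Qed.

Lemma copp_add x y : circle_opp (circle_add x y) = circle_add (circle_opp x) (circle_opp y).
Proof. circle_reals. rewrite !add_proj, !opp_proj, add_proj. f_equal; ring. Qed.

Lemma nmul_add n x y :
  circle_nmul n (circle_add x y) = circle_add (circle_nmul n x) (circle_nmul n y).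
Proof. circle_reals. rewrite add_proj, !nmul_proj, add_proj. f_equal; ring. Qed.

Definition circle_near (x y : circle) (e : R) : Prop :=
  near_int (proj1_sig x - proj1_sig y) e.

Lemma circle_near_refl x e : 0 < e -> circle_near x x e.
Proof. intros; unfold circle_near; rewrite Rminus_diag; apply near_int_0; auto. Qed.

Lemma circle_near_trans x y w e1 e2 :
  circle_near x y e1 -> circle_near y w e2 -> circle_near x w (e1 + e2).
Proof.
  unfold circle_near; intros H1 H2.
  replace (proj1_sig x - proj1_sig w)
    with ((proj1_sig x - proj1_sig y) + (proj1_sig y - proj1_sig w)) by ring.
  apply near_int_add; auto.
Qed.

Lemma circle_near_mono x y e e' : e <= e' -> circle_near x y e -> circle_near x y e'.
Proof. unfold circle_near; apply near_int_mono. Qed.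

Lemma circle_near_proj r s e :
  circle_near (circle_proj r) (circle_proj s) e <-> near_int (r - s) e.
Proof.
  unfold circle_near.
  assert (C : congZ (proj1_sig (circle_proj r) - proj1_sig (circle_proj s)) (r - s))
    by (apply congZ_add; [|apply congZ_opp]; apply val_proj).
  split; apply near_int_congZ; auto using congZ_sym.
Qed.

Lemma circle_near_add x' x y' y e1 e2 : circle_near x' x e1 -> circle_near y' y e2 ->
  circle_near (circle_add x' y') (circle_add x y) (e1 + e2).
Proof.
  circle_reals. rewrite !add_proj, !circle_near_proj. intros H1 H2.
  replace (r2 + r0 - (r1 + r)) with ((r2 - r1) + (r0 - r)) by ring.
  apply near_int_add; auto.
Qed.

Lemma circle_near_opp x' x e : circle_near x' x e -> circle_near (circle_opp x') (circle_opp x) e.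
Proof.
  circle_reals. rewrite !opp_proj, !circle_near_proj. intros H.
  replace (- r0 - - r) with (- (r0 - r)) by ring. apply near_int_opp; auto.
Qed.

Lemma circle_open_iff U : circle_open U <->
  forall r, U (circle_proj r) ->
    exists d, d > 0 /\ forall s, Rabs (s - r) < d -> U (circle_proj s).
Proof.
  unfold circle_open, open_set, neighbourhood, included, disc. split.
  - intros H r Hr. destruct (H r Hr) as [[d Hd] Hd']. exists d; split; auto.
  - intros H r Hr. destruct (H r Hr) as [d [Hd Hd']]. exists (mkposreal d Hd). simpl. auto.
Qed.

Lemma circle_open_near U : circle_open U -> forall r, U (circle_proj r) ->
  exists d, d > 0 /\ forall s, near_int (s - r) d -> U (circle_proj s).
Proof.
  intros HU r Hr. rewrite circle_open_iff in HU. destruct (HU r Hr) as [d [Hd H]].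
  exists d; split; auto. intros s [z Hz].
  replace (circle_proj s) with (circle_proj (s - IZR z)).
  - apply H. replace (s - IZR z - r) with (s - r - IZR z) by ring. auto.
  - apply proj_eq. exists (- z)%Z. rewrite opp_IZR; ring.
Qed.

(** ** The semidirect product H = T^Z ⋊ Z *)

(** A pair (f, a) is the element of H with T^Z-component f and shift a. *)
Definition Hc : Type := ((Z -> circle) * Z)%type.

Definition Hmul (h1 h2 : Hc) : Hc :=
  (fun j => circle_add (fst h1 j) (fst h2 (j + snd h1)%Z), (snd h1 + snd h2)%Z).
Definition Hone : Hc := (fun _ => circle_zero, 0%Z).
Definition Hinv (h : Hc) : Hc := (fun j => circle_opp (fst h (j - snd h)%Z), (- snd h)%Z).

(** Product topology on T^Z times the discrete topology on Z: basic
    neighbourhoods fix the shift and finitely many coordinates up to e. *)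
Definition Hopen (V : Hc -> Prop) : Prop :=
  forall h, V h -> exists (J : list Z) (e : R), e > 0 /\
    forall h', snd h' = snd h ->
      (forall j, In j J -> circle_near (fst h' j) (fst h j) e) -> V h'.

Lemma Hassoc x y z : Hmul x (Hmul y z) = Hmul (Hmul x y) z.
Proof.
  destruct x as [f a], y as [g b], z as [k c]; unfold Hmul; simpl. f_equal.
  - apply functional_extensionality; intro j. rewrite cadd_assoc.
    replace (j + (a + b))%Z with (j + a + b)%Z by ring. reflexivity.
  - ring.
Qed.

Lemma Hmul1l x : Hmul Hone x = x.
Proof.
  destruct x as [f a]; unfold Hmul, Hone; simpl. f_equal.
  apply functional_extensionality; intro j. rewrite cadd_0_l. f_equal; ring.
Qed.

Lemma Hmul1r x : Hmul x Hone = x.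
Proof.
  destruct x as [f a]; unfold Hmul, Hone; simpl. f_equal; [|ring].
  apply functional_extensionality; intro j. apply cadd_0_r.
Qed.

Lemma HmulVl x : Hmul (Hinv x) x = Hone.
Proof.
  destruct x as [f a]; unfold Hmul, Hone, Hinv; simpl. f_equal; [|ring].
  apply functional_extensionality; intro j.
  replace (j + - a)%Z with (j - a)%Z by ring. apply cadd_opp_l.
Qed.

Lemma HmulVr x : Hmul x (Hinv x) = Hone.
Proof.
  destruct x as [f a]; unfold Hmul, Hone, Hinv; simpl. f_equal; [|ring].
  apply functional_extensionality; intro j.
  replace (j + a - a)%Z with j by ring. apply cadd_opp_r.
Qed.

Lemma Hopen_full : Hopen (fun _ => True).
Proof. intros h _. exists nil, 1. split; [lra | auto]. Qed.

Lemma Hopen_inter U V : Hopen U -> Hopen V -> Hopen (fun x => U x /\ V x).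
Proof.
  intros HU HV h [Uh Vh].
  destruct (HU h Uh) as [J1 [e1 [He1 H1]]], (HV h Vh) as [J2 [e2 [He2 H2]]].
  exists (J1 ++ J2), (Rmin e1 e2). split; [apply Rmin_pos; auto|].
  intros h' Hs Hn. split.
  - apply H1; auto. intros j Hj. eapply circle_near_mono; [apply Rmin_l|].
    apply Hn, in_or_app; auto.
  - apply H2; auto. intros j Hj. eapply circle_near_mono; [apply Rmin_r|].
    apply Hn, in_or_app; auto.
Qed.

Lemma Hopen_union (F : (Hc -> Prop) -> Prop) :
  (forall U, F U -> Hopen U) -> Hopen (fun x => exists U, F U /\ U x).
Proof.
  intros HF h [U [FU Uh]]. destruct (HF U FU h Uh) as [J [e [He H]]].
  exists J, e. split; auto. intros h' Hs Hn. exists U. split; auto.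
Qed.

(** Multiplication is continuous: if each factor moves by less than e/2 on
    the relevant (shifted) coordinates, the product moves by less than e. *)
Lemma Hmul_cont W x y : Hopen W -> W (Hmul x y) ->
  exists U V, Hopen U /\ Hopen V /\ U x /\ V y /\
    (forall a b, U a -> V b -> W (Hmul a b)).
Proof.
  destruct x as [f a], y as [g b]. intros HW Wxy. destruct (HW _ Wxy) as [J [e [He H]]].
  exists (fun h' : Hc => snd h' = a /\ exists eta, 0 < eta < e / 2 /\
             forall j, In j J -> circle_near (fst h' j) (f j) eta).
  exists (fun h' : Hc => snd h' = b /\ exists eta, 0 < eta < e / 2 /\
             forall j, In j J -> circle_near (fst h' (j + a)%Z) (g (j + a)%Z) eta).
  split; [| split; [| split; [| split]]].
  - intros h' [Hs [eta [Heta Hn]]]. exists J, ((e / 2 - eta) / 2). split; [lra|].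
    intros h'' Hs' Hn'. split; [congruence|]. exists ((e / 2 - eta) / 2 + eta).
    split; [lra|]. intros j Hj. eapply circle_near_trans; [apply Hn' | apply Hn]; auto.
  - intros h' [Hs [eta [Heta Hn]]].
    exists (map (fun j => (j + a)%Z) J), ((e / 2 - eta) / 2). split; [lra|].
    intros h'' Hs' Hn'. split; [congruence|]. exists ((e / 2 - eta) / 2 + eta).
    split; [lra|]. intros j Hj. eapply circle_near_trans; [apply Hn' | apply Hn]; auto.
    apply in_map_iff. exists j; auto.
  - split; auto. exists (e / 4). split; [lra|]. intros; apply circle_near_refl; lra.
  - split; auto. exists (e / 4). split; [lra|]. intros; apply circle_near_refl; lra.
  - intros [f' a'] [g' b'] [Ha [eta1 [He1 H1]]] [Hb [eta2 [He2 H2]]]. simpl in *.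
    subst a' b'. apply H; [reflexivity|]. intros j Hj. unfold Hmul; simpl.
    eapply circle_near_mono; [| apply circle_near_add; [apply (H1 j Hj) | apply (H2 j Hj)]].
    lra.
Qed.

Lemma Hinv_cont W : Hopen W -> Hopen (fun x => W (Hinv x)).
Proof.
  intros HW [f a] Wx. destruct (HW _ Wx) as [J [e [He H]]].
  exists (map (fun j => (j - a)%Z) J), e. split; auto.
  intros [f' a'] Hs Hn. simpl in Hs; subst a'. apply H; [reflexivity|].
  intros j Hj. unfold Hinv; simpl. apply circle_near_opp, Hn.
  apply in_map_iff. exists j; auto.
Qed.

Definition HG : TopGroup := {|
  tg_car := Hc; tg_mul := Hmul; tg_one := Hone; tg_inv := Hinv;
  tg_assoc := Hassoc; tg_mul1l := Hmul1l; tg_mul1r := Hmul1r;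
  tg_mulVl := HmulVl; tg_mulVr := HmulVr;
  tg_open := Hopen; tg_open_full := Hopen_full; tg_open_inter := Hopen_inter;
  tg_open_union := Hopen_union; tg_mul_cont := Hmul_cont; tg_inv_cont := Hinv_cont |}.

Definition circle_hom (e : circle -> circle) : Prop :=
  forall x y, e (circle_add x y) = circle_add (e x) (e y).
Definition unif_cont (e : circle -> circle) : Prop :=
  forall eps, eps > 0 -> exists d, d > 0 /\
    forall x y, circle_near x y d -> circle_near (e x) (e y) eps.

Lemma small_finite (P : Z -> R -> Prop) :
  (forall j, exists d, d > 0 /\ forall s, Rabs s < d -> P j s) ->
  forall J, exists d, d > 0 /\ forall s, Rabs s < d -> forall j, In j J -> P j s.
Proof.
  intros HP J. induction J as [|j J [d1 [Hd1 H1]]].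
  - exists 1. split; [lra|]. intros s _ j [].
  - destruct (HP j) as [d2 [Hd2 H2]]. exists (Rmin d1 d2). split; [apply Rmin_pos; auto|].
    intros s Hs k [<- | Hk].
    + apply H2. eapply Rlt_le_trans; [exact Hs | apply Rmin_r].
    + apply H1; auto. eapply Rlt_le_trans; [exact Hs | apply Rmin_l].
Qed.

Section Embedding.
Variable psi : Z -> circle -> circle.
Hypothesis psi0 : forall x, psi 0%Z x = x.
Hypothesis psi_hom : forall j, circle_hom (psi j).
Hypothesis psi_cont : forall j, unif_cont (psi j).

Definition psi_embed (x : circle) : HG := (fun j => psi j x, 0%Z).

(** Preimages of open sets of H are open: each basic neighbourhood only
    involves finitely many psi_j, which are jointly continuous. *)
Lemma psi_embed_continuous V : Hopen V -> circle_open (fun x => V (psi_embed x)).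
Proof.
  intros HV. apply circle_open_iff. intros r Vr.
  destruct (HV _ Vr) as [J [e [He H]]].
  destruct (small_finite
      (fun j s => circle_near (psi j (circle_proj (r + s))) (psi j (circle_proj r)) e))
    with (J := J) as [d [Hd Hsmall]].
  { intros j. destruct (psi_cont j e He) as [d [Hd Hd']]. exists d. split; auto.
    intros s Hs. apply Hd', circle_near_proj. exists 0%Z.
    replace (r + s - r - 0) with s by ring. exact Hs. }
  exists d. split; auto. intros s Hs. replace s with (r + (s - r)) by ring.
  apply H; [reflexivity|]. intros j Hj. apply Hsmall; auto.
Qed.

(** The 0-th coordinate already makes psi_embed open onto its image. *)
Lemma psi_embed_open U : circle_open U ->
  exists V, Hopen V /\ forall x, U x <-> V (psi_embed x).
Proof.
  intros HU. exists (fun h : Hc => U (fst h 0%Z)). split.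
  - intros [f a] Uh. simpl in Uh. destruct (proj_surj (f 0%Z)) as [r Er].
    rewrite Er in Uh. destruct (circle_open_near U HU r Uh) as [d [Hd H]].
    exists (0%Z :: nil), d. split; auto. intros [f' a'] _ Hn. simpl.
    specialize (Hn 0%Z (or_introl eq_refl)). simpl in Hn. rewrite Er in Hn.
    destruct (proj_surj (f' 0%Z)) as [s Es]. rewrite Es in Hn |- *.
    apply H, circle_near_proj, Hn.
  - intros x. simpl. rewrite psi0. tauto.
Qed.

Lemma psi_embedding : top_embedding circle_add circle_open HG psi_embed.
Proof.
  split; [| split; [| split]].
  - intros x y. simpl. unfold Hmul, psi_embed; simpl. f_equal.
    apply functional_extensionality; intro j. rewrite Z.add_0_r. apply psi_hom.
  - intros x y E. apply (f_equal (fun h : Hc => fst h 0%Z)) in E. simpl in E.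
    rewrite !psi0 in E. exact E.
  - apply psi_embed_continuous.
  - apply psi_embed_open.
Qed.
End Embedding.

Lemma iter_hom (e : circle -> circle) n : circle_hom e -> circle_hom (Nat.iter n e).
Proof. intros He x y. induction n as [|n IH]; simpl; auto. rewrite IH; apply He. Qed.

Lemma iter_unif_cont (e : circle -> circle) n : unif_cont e -> unif_cont (Nat.iter n e).
Proof.
  intros He. induction n as [|n IH]; simpl.
  - intros eps Heps. exists eps; split; auto.
  - intros eps Heps. destruct (He eps Heps) as [d [Hd H]]. destruct (IH d Hd) as [d' [Hd' H']].
    exists d'. split; auto.
    intros x y Hxy. apply H, H', Hxy.
Qed.

Definition two_sided_iter (e1 e2 : circle -> circle) (j : Z) (x : circle) : circle :=
  if Z.leb 0 j then Nat.iter (Z.to_nat j) e1 x else Nat.iter (Z.to_nat (- j)) e2 x.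

Lemma two_sided_iter_shift e1 e2 g1 g2 : e1 g1 = g2 -> e2 g2 = g1 ->
  forall j, two_sided_iter e1 e2 (j + 1) g1 = two_sided_iter e1 e2 j g2.
Proof.
  intros E1 E2 j. unfold two_sided_iter. destruct (Z.leb_spec 0 j).
  - destruct (Z.leb_spec 0 (j + 1)); [|lia].
    replace (Z.to_nat (j + 1)) with (S (Z.to_nat j)) by lia.
    rewrite Nat.iter_succ_r, E1. reflexivity.
  - destruct (Z.eq_dec j (-1)) as [-> | Hj].
    + simpl. rewrite E2. reflexivity.
    + destruct (Z.leb_spec 0 (j + 1)); [lia|].
      replace (Z.to_nat (- j)) with (S (Z.to_nat (- (j + 1)))) by lia.
      rewrite Nat.iter_succ_r, E2. reflexivity.
Qed.

(** Continuous endomorphisms exchanging g1 and g2 make them induced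
    conjugated: the shift of H conjugates one image to the other. *)
Lemma conjugated_by_endomorphisms (e1 e2 : circle -> circle) g1 g2 :
  circle_hom e1 -> circle_hom e2 -> unif_cont e1 -> unif_cont e2 ->
  e1 g1 = g2 -> e2 g2 = g1 ->
  induced_conjugated circle_add circle_open g1 g2.
Proof.
  intros h1 h2 u1 u2 E1 E2.
  exists HG, (psi_embed (two_sided_iter e1 e2)). split.
  - apply psi_embedding.
    + intros x; reflexivity.
    + intros j. unfold two_sided_iter. destruct (Z.leb 0 j); apply iter_hom; auto.
    + intros j x. unfold two_sided_iter. destruct (Z.leb 0 j); apply iter_unif_cont; auto.
  - exists ((fun _ => circle_zero), 1%Z). simpl. unfold Hmul, Hinv, psi_embed; simpl.
    f_equal. apply functional_extensionality; intro j.
    rewrite copp_0, cadd_0_r, cadd_0_l. apply two_sided_iter_shift; auto.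
Qed.

Lemma nmul_hom k : circle_hom (circle_nmul k).
Proof. intros x y; apply nmul_add. Qed.

Lemma nmul_unif_cont k : unif_cont (circle_nmul k).
Proof.
  intros eps Heps. pose proof (pos_INR k) as Hk.
  exists (eps / (INR k + 1)). split; [apply Rdiv_lt_0_compat; lra|].
  intros x y H. circle_reals. rewrite !nmul_proj, circle_near_proj.
  rewrite circle_near_proj in H.
  apply (near_int_nat k) in H; [| apply Rdiv_lt_0_compat; lra].
  replace ((INR k + 1) * (eps / (INR k + 1))) with eps in H by (field; lra).
  replace (INR k * r0 - INR k * r) with (INR k * (r0 - r)) by ring. exact H.
Qed.

Lemma opp_hom : circle_hom circle_opp.
Proof. intros x y; apply copp_add. Qed.

Lemma opp_unif_cont : unif_cont circle_opp.
Proof. intros eps Heps. exists eps. split; auto. intros; apply circle_near_opp; auto. Qed.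

Lemma order_rational g n : circle_order g n -> exists p : Z,
  IZR (Z.of_nat n) * proj1_sig g = IZR p /\ Z.gcd p (Z.of_nat n) = 1%Z.
Proof.
  intros [Hn [Hz Hmin]]. rewrite <- (proj_val g) in Hz, Hmin.
  set (a := proj1_sig g) in *.
  apply nmul_zero_iff in Hz. destruct Hz as [p Hp]. rewrite Rminus_0_r in Hp.
  exists p. rewrite <- INR_IZR_INZ. split; auto.
  set (N := Z.of_nat n). set (d := Z.gcd p N).
  destruct (Z.gcd_divide_l p N) as [p' Ep]. destruct (Z.gcd_divide_r p N) as [N' EN].
  fold d in Ep, EN.
  assert (Hd : d <> 0%Z) by (intro E; rewrite E in EN; unfold N in EN; lia).
  assert (Hd0 : (0 <= d)%Z) by apply Z.gcd_nonneg.
  destruct (Z.eq_dec d 1) as [E | Hne]; auto. exfalso.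
  (* n / d < n already annihilates g *)
  assert (HN' : (0 < N' < N)%Z) by (unfold N in *; nia).
  apply (Hmin (Z.to_nat N')); [lia|].
  apply nmul_zero_iff. exists p'.
  rewrite INR_IZR_INZ, Z2Nat.id by lia.
  apply Rmult_eq_reg_l with (IZR d); [| apply not_0_IZR; auto].
  replace (IZR d * (IZR N' * a - 0)) with (IZR (N' * d) * a) by (rewrite mult_IZR; ring).
  rewrite <- EN. unfold N. rewrite <- INR_IZR_INZ, Hp, Ep, mult_IZR. ring.
Qed.

(** Two elements of the same finite order are multiples of each other:
    with g1 = p/n, g2 = q/n and u p + v n = 1, we get (u q) g1 = g2. *)
Lemma same_order_multiple g1 g2 n : circle_order g1 n -> circle_order g2 n ->
  exists k, circle_nmul k g1 = g2.
Proof.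
  intros H1 H2. pose proof (proj1 H1) as Hn.
  destruct (order_rational _ _ H1) as [p [Hp Gp]].
  destruct (order_rational _ _ H2) as [q [Hq _]].
  set (N := Z.of_nat n) in *. assert (HN : (0 < N)%Z) by (unfold N; lia).
  pose proof (Zgcd_is_gcd p N) as G. rewrite Gp in G.
  destruct (Zis_gcd_bezout _ _ _ G) as [u v Huv].
  set (k := ((u * q) mod N)%Z). set (w := ((u * q) / N)%Z).
  assert (Ek : (u * q = N * w + k)%Z) by (apply Z.div_mod; lia).
  assert (Hk : (0 <= k)%Z) by (apply Z.mod_pos_bound; lia).
  exists (Z.to_nat k).
  rewrite <- (proj_val g1), <- (proj_val g2), nmul_proj. apply proj_eq.
  exists (- (q * v) - w * p)%Z. rewrite INR_IZR_INZ, Z2Nat.id by lia.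
  apply Rmult_eq_reg_l with (IZR N); [| apply not_0_IZR; lia].
  replace (IZR N * (IZR k * proj1_sig g1 - proj1_sig g2))
    with (IZR k * (IZR N * proj1_sig g1) - IZR N * proj1_sig g2) by ring.
  rewrite Hp, Hq, <- !mult_IZR, <- minus_IZR. apply f_equal.
  assert (Hq2 : (q * (u * p + v * N) = q)%Z) by (rewrite Huv; ring). nia.
Qed.

Lemma sufficiency g1 g2 :
  ((exists n : nat, circle_order g1 n /\ circle_order g2 n) \/
   (g1 = g2 \/ g1 = circle_opp g2)) ->
  induced_conjugated circle_add circle_open g1 g2.
Proof.
  intros [[n [H1 H2]] | [E | E]].
  - destruct (same_order_multiple _ _ _ H1 H2) as [k Hk].
    destruct (same_order_multiple _ _ _ H2 H1) as [l Hl].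
    apply (conjugated_by_endomorphisms (circle_nmul k) (circle_nmul l));
      auto using nmul_hom, nmul_unif_cont.
  - subst g2. apply (conjugated_by_endomorphisms (fun x => x) (fun x => x)); auto.
    + intros x y; reflexivity.
    + intros x y; reflexivity.
    + intros eps Heps; exists eps; auto.
    + intros eps Heps; exists eps; auto.
  - apply (conjugated_by_endomorphisms circle_opp circle_opp);
      auto using opp_hom, opp_unif_cont.
    rewrite E; apply copp_opp.
Qed.

Section TopGroupFacts.
Variable H : TopGroup.
Notation "x * y" := (tg_mul H x y).
Notation "1" := (tg_one H).
Notation "x ^-1" := (tg_inv H x) (at level 3).

Lemma tg_cancel_l t x y : t * x = t * y -> x = y.
Proof.
  intros E. rewrite <- (tg_mul1l H x), <- (tg_mul1l H y), <- (tg_mulVl H t), <- !tg_assoc, E.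
  reflexivity.
Qed.

Lemma tg_cancel_r t x y : x * t = y * t -> x = y.
Proof.
  intros E. rewrite <- (tg_mul1r H x), <- (tg_mul1r H y), <- (tg_mulVr H t), !tg_assoc, E.
  reflexivity.
Qed.

Lemma tg_idem x : x * x = x -> x = 1.
Proof. intros E. apply (tg_cancel_l x). rewrite tg_mul1r; auto. Qed.

Lemma tg_invinv x : (x ^-1) ^-1 = x.
Proof. apply (tg_cancel_l (x ^-1)). rewrite tg_mulVr, tg_mulVl. reflexivity. Qed.

Definition conj (t x : H) : H := t * x * t ^-1.

Lemma conj_mul t x y : conj t (x * y) = conj t x * conj t y.
Proof.
  unfold conj. rewrite <- (tg_assoc H (t * x) (t ^-1) (t * y * t ^-1)).
  rewrite (tg_assoc H (t ^-1) (t * y) (t ^-1)), (tg_assoc H (t ^-1) t y), tg_mulVl, tg_mul1l.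
  rewrite (tg_assoc H (t * x) y (t ^-1)), <- (tg_assoc H t x y). reflexivity.
Qed.

Lemma conj_one t : conj t 1 = 1.
Proof. unfold conj. rewrite tg_mul1r, tg_mulVr. reflexivity. Qed.

Lemma conj_inj t x y : conj t x = conj t y -> x = y.
Proof. unfold conj. intros E. apply tg_cancel_r, tg_cancel_l in E. exact E. Qed.

Lemma conj_inv t x : conj (t ^-1) (conj t x) = x.
Proof.
  unfold conj. rewrite tg_invinv, !tg_assoc, tg_mulVl, tg_mul1l.
  rewrite <- !tg_assoc, tg_mulVl, tg_mul1r. reflexivity.
Qed.

Fixpoint tg_pow (n : nat) (x : H) : H := match n with O => 1 | S m => x * tg_pow m x end.

Lemma conj_pow t n x : conj t (tg_pow n x) = tg_pow n (conj t x).
Proof.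
  induction n as [|n IH]; simpl; [apply conj_one|]. rewrite conj_mul, IH; reflexivity.
Qed.

Lemma tg_open_ext (P Q : H -> Prop) : (forall x, P x <-> Q x) -> tg_open H P -> tg_open H Q.
Proof.
  intros E HP. replace Q with P; auto.
  apply functional_extensionality; intro x. apply propositional_extensionality; auto.
Qed.

(** Translations are continuous: a union of open sets mapped into W. *)
Lemma open_transl_l W t : tg_open H W -> tg_open H (fun x => W (t * x)).
Proof.
  intros HW.
  apply tg_open_ext with
    (fun x => exists U, (tg_open H U /\ forall a, U a -> W (t * a)) /\ U x).
  - intros x. split.
    + intros [U [[_ HU] Ux]]. auto.
    + intros Wx. destruct (tg_mul_cont H W t x HW Wx) as [U1 [V1 [_ [HV1 [Ut [Vx Hp]]]]]].
      exists V1. split; auto.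
  - apply tg_open_union. intros U [HU _]; auto.
Qed.

Lemma open_transl_r W t : tg_open H W -> tg_open H (fun x => W (x * t)).
Proof.
  intros HW.
  apply tg_open_ext with
    (fun x => exists U, (tg_open H U /\ forall a, U a -> W (a * t)) /\ U x).
  - intros x. split.
    + intros [U [[_ HU] Ux]]. auto.
    + intros Wx. destruct (tg_mul_cont H W x t HW Wx) as [U1 [V1 [HU1 [_ [Ux [Vt Hp]]]]]].
      exists U1. split; auto.
  - apply tg_open_union. intros U [HU _]; auto.
Qed.

Lemma open_conj W t : tg_open H W -> tg_open H (fun x => W (conj t x)).
Proof.
  intros HW. unfold conj.
  apply tg_open_ext with (fun x => (fun y => W (y * t ^-1)) (t * x)); [tauto|].
  apply (open_transl_l (fun y => W (y * t ^-1)) t), open_transl_r; auto.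
Qed.

End TopGroupFacts.

Section EmbeddedCircle.
Variable H : TopGroup.
Variable i : circle -> H.
Hypothesis Hi : top_embedding circle_add circle_open H i.

Lemma embed_zero : i circle_zero = tg_one H.
Proof. apply tg_idem. rewrite <- (proj1 Hi), cadd_0_l. reflexivity. Qed.

Lemma embed_nmul n x : i (circle_nmul n x) = tg_pow H n (i x).
Proof.
  induction n as [|n IH]; simpl; [apply embed_zero|]. rewrite (proj1 Hi), IH. reflexivity.
Qed.

Section Conjugate.
Variables (t : H) (g1 g2 : circle).
Hypothesis Et : conj H t (i g1) = i g2.

Lemma conj_embed_nmul n : i (circle_nmul n g2) = conj H t (i (circle_nmul n g1)).
Proof. rewrite !embed_nmul, conj_pow, Et. reflexivity. Qed.

Lemma conj_annihilators n :
  circle_nmul n g1 = circle_zero <-> circle_nmul n g2 = circle_zero.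
Proof.
  pose proof (conj_embed_nmul n) as C. pose proof (proj1 (proj2 Hi)) as Hinj. split; intros Z.
  - apply Hinj. rewrite C, Z, embed_zero, conj_one. reflexivity.
  - apply Hinj, (conj_inj H t). rewrite <- C, Z, embed_zero, conj_one. reflexivity.
Qed.

(** Continuity of conjugation at 1, read on the multiples of g1 and g2:
    n g1 close to 0 forces n g2 close to 0. *)
Lemma conj_small_multiples e : e > 0 -> exists d, d > 0 /\ forall n : nat,
  near_int (INR n * proj1_sig g1) d -> near_int (INR n * proj1_sig g2) e.
Proof.
  intros He. set (W := fun c : circle => near_int (proj1_sig c) e).
  assert (HW : circle_open W).
  { apply circle_open_iff. intros r Wr. unfold W in Wr.
    apply near_int_congZ with (s := r) in Wr; [| apply val_proj]. destruct Wr as [z Hz].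
    exists (e - Rabs (r - IZR z)). split; [lra|]. intros s Hs. unfold W.
    apply near_int_congZ with s; [apply congZ_sym, val_proj|]. exists z.
    replace (s - IZR z) with ((s - r) + (r - IZR z)) by ring.
    eapply Rle_lt_trans; [apply Rabs_triang | lra]. }
  destruct (proj2 (proj2 (proj2 Hi)) W HW) as [V [HV EV]].
  pose proof (proj1 (proj2 (proj2 Hi)) _ (open_conj H V t HV)) as HU.
  assert (U0 : V (conj H t (i (circle_proj 0)))).
  { fold circle_zero. rewrite embed_zero, conj_one, <- embed_zero. apply EV. unfold W.
    apply near_int_congZ with 0; [apply congZ_sym, val_proj | apply near_int_0; auto]. }
  destruct (circle_open_near _ HU 0 U0) as [d [Hd Hn]]. exists d. split; auto.
  intros n Hnear. specialize (Hn (INR n * proj1_sig g1)).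
  rewrite Rminus_0_r, <- nmul_proj, proj_val, <- conj_embed_nmul in Hn.
  apply EV in Hn; auto. unfold W in Hn.
  apply near_int_congZ with (proj1_sig (circle_nmul n g2)); auto.
  rewrite <- (proj_val g2) at 1. rewrite nmul_proj. apply val_proj.
Qed.
End Conjugate.
End EmbeddedCircle.

(** ** Multiples of an irrational number *)

Definition irrational (a : R) : Prop :=
  forall m : Z, m <> 0%Z -> forall z : Z, IZR m * a <> IZR z.

Definition mult_controlled (a b : R) : Prop :=
  forall e, e > 0 -> exists d, d > 0 /\
    forall n : Z, near_int (IZR n * a) d -> near_int (IZR n * b) e.

Lemma pigeonhole (N : nat) (f : nat -> nat) : (forall j, (j <= N)%nat -> (f j < N)%nat) ->
  exists i j, (i < j <= N)%nat /\ f i = f j.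
Proof.
  intros Hf. destruct (classic (NoDup (map f (seq 0 (S N))))) as [Hnd | Hdup].
  - exfalso. apply NoDup_incl_length with (l' := seq 0 N) in Hnd.
    + rewrite length_map, !length_seq in Hnd. lia.
    + intros y Hy. apply in_map_iff in Hy as [j [<- Hj]]. apply in_seq in Hj.
      apply in_seq. specialize (Hf j). lia.
  - apply NNPP; intros Hno. apply Hdup, NoDup_map_NoDup_ForallPairs; [|apply seq_NoDup].
    intros i j Hi Hj E. apply in_seq in Hi, Hj.
    destruct (Nat.lt_trichotomy i j) as [Hlt | [Heq | Hgt]]; auto; exfalso; apply Hno.
    + exists i, j. split; [lia | auto].
    + exists j, i. split; [lia | auto].
Qed.

Lemma fractional_parts_close a (N : nat) : (0 < N)%nat ->
  exists i j : nat, (i < j)%nat /\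
    Rabs (frac_part (INR j * a) - frac_part (INR i * a)) < / INR N.
Proof.
  intros HN. assert (HNpos : 0 < INR N) by (apply lt_0_INR; lia).
  (* u in [0, 1) falls in the box number Int_part (N u) of {0, ..., N-1} *)
  assert (Hbox : forall u, 0 <= u < 1 -> (0 <= Int_part (INR N * u) < Z.of_nat N)%Z).
  { intros u Hu. destruct (base_Int_part (INR N * u)) as [B1 B2].
    split; [cut (-1 < Int_part (INR N * u))%Z; [lia|] |]; apply lt_IZR.
    - simpl. nra.
    - rewrite <- INR_IZR_INZ. nra. }
  set (box := fun j : nat => Z.to_nat (Int_part (INR N * frac_part (INR j * a)))).
  destruct (pigeonhole N box) as [i [j [Hij E]]].
  { intros j _. unfold box. pose proof (Hbox _ (frac_part_range (INR j * a))). lia. }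
  exists i, j. split; [lia|]. unfold box in E.
  pose proof (Hbox _ (frac_part_range (INR i * a))) as Bi.
  pose proof (Hbox _ (frac_part_range (INR j * a))) as Bj.
  apply Z2Nat.inj in E; [| lia | lia].
  set (u := frac_part (INR i * a)) in *. set (v := frac_part (INR j * a)) in *.
  destruct (base_Int_part (INR N * u)), (base_Int_part (INR N * v)). rewrite E in *.
  assert (Hd : Rabs (INR N * (v - u)) < 1) by (apply Rabs_def1; lra).
  rewrite Rabs_mult, Rabs_pos_eq in Hd by lra.
  apply Rmult_lt_reg_l with (INR N); [lra|]. rewrite Rinv_r by lra. exact Hd.
Qed.

Lemma small_positive_multiple a : irrational a -> forall eta, 0 < eta ->
  exists m z : Z, 0 < IZR m * a - IZR z < eta.
Proof.
  intros Ha eta Heta. destruct (archimed_cor1 eta Heta) as [N [HN HN0]].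
  destruct (fractional_parts_close a N HN0) as [i [j [Hij Hclose]]].
  set (m := (Z.of_nat j - Z.of_nat i)%Z).
  set (z := (Int_part (INR j * a) - Int_part (INR i * a))%Z).
  assert (E : frac_part (INR j * a) - frac_part (INR i * a) = IZR m * a - IZR z).
  { unfold m, z, frac_part. rewrite !minus_IZR, <- !INR_IZR_INZ. ring. }
  rewrite E in Hclose.
  assert (Hne : IZR m * a - IZR z <> 0).
  { intro E0. apply (Ha m ltac:(unfold m; lia) z). lra. }
  destruct (Rlt_le_dec 0 (IZR m * a - IZR z)).
  - exists m, z. rewrite Rabs_pos_eq in Hclose; lra.
  - exists (- m)%Z, (- z)%Z. rewrite !opp_IZR. rewrite Rabs_left1 in Hclose; lra.
Qed.

Lemma approx_by_multiples a : irrational a -> forall x eta, eta > 0 ->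
  exists m z : Z, Rabs (IZR m * a - IZR z - x) < eta.
Proof.
  intros Ha x eta Heta. destruct (small_positive_multiple a Ha eta Heta) as [m0 [z0 [H1 H2]]].
  set (t := IZR m0 * a - IZR z0) in *. destruct (floor_multiple x t H1) as [q Hq].
  exists (q * m0)%Z, (q * z0)%Z. rewrite !mult_IZR.
  replace (IZR q * IZR m0 * a - IZR q * IZR z0) with (IZR q * t) by (unfold t; ring).
  apply Rabs_def1; lra.
Qed.

(** If b = K a on every multiple n a close to Z, then b = K a in T:
    write 1 = (1 + j m0) - j m0 with both m0 a and (1 + j m0) a close to Z. *)
Lemma congZ_of_small_multiples a b (K : Z) eps : irrational a -> 0 < eps <= 1 ->
  (forall n : Z, near_int (IZR n * a) eps -> congZ (IZR n * b) (IZR K * (IZR n * a))) ->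
  congZ b (IZR K * a).
Proof.
  intros Ha Heps Hsmall.
  destruct (small_positive_multiple a Ha eps ltac:(lra)) as [m0 [z0 [H1 H2]]].
  assert (Hm0 : m0 <> 0%Z).
  { intros ->. rewrite Rmult_0_l in H1, H2.
    assert (-1 < z0 < 0)%Z by (split; apply lt_IZR; simpl; lra). lia. }
  assert (Near0 : near_int (IZR m0 * a) eps).
  { exists z0. rewrite Rabs_pos_eq; lra. }
  assert (Hirr : irrational (IZR m0 * a)).
  { intros m Hm z E. apply (Ha (m * m0)%Z ltac:(lia) z). rewrite mult_IZR, <- E. ring. }
  destruct (approx_by_multiples _ Hirr (- a) eps ltac:(lra)) as [j [w Hjw]].
  assert (Near1 : near_int (IZR (1 + j * m0) * a) eps).
  { exists w. rewrite plus_IZR, mult_IZR.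
    replace ((1 + IZR j * IZR m0) * a - IZR w) with (IZR j * (IZR m0 * a) - IZR w - - a)
      by ring. exact Hjw. }
  destruct (Hsmall _ Near0) as [p Hp]. destruct (Hsmall _ Near1) as [p1 Hp1].
  rewrite plus_IZR, mult_IZR in Hp1.
  exists (p1 - j * p)%Z. rewrite minus_IZR, mult_IZR, <- Hp, <- Hp1. ring.
Qed.

Lemma Rabs_mult_le p q A B : Rabs p <= A -> Rabs q <= B -> Rabs (p * q) <= A * B.
Proof. intros H1 H2. rewrite Rabs_mult. apply Rmult_le_compat; auto using Rabs_pos. Qed.

Lemma Rabs_sum4_le p q r s : Rabs (p + q - r - s) <= Rabs p + Rabs q + Rabs r + Rabs s.
Proof. unfold Rabs; repeat destruct Rcase_abs; lra. Qed.

Lemma Rabs_arbitrarily_small r : (forall e, 0 < e -> e <= 1/8 -> Rabs r < e) -> r = 0.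
Proof.
  intros H. destruct (Req_dec r 0) as [E | Hne]; auto. exfalso.
  pose proof (Rabs_pos_lt r Hne). pose proof (Rmin_l (Rabs r) (1/8)).
  assert (Rabs r < Rmin (Rabs r) (1 / 8)) by (apply H; [apply Rmin_pos; lra | apply Rmin_r]).
  lra.
Qed.

(** ** Controlled multiples of an irrational are integer multiples *)

Section LocalLift.
Variables a b D : R.
Hypothesis Ha : irrational a.
Hypothesis Hctrl : mult_controlled a b.
Hypothesis HD : 0 < D <= 1/4.
Hypothesis HdomD : forall n : Z, near_int (IZR n * a) D -> near_int (IZR n * b) (1/8).

(** [lift n x y]: x and y are small real representatives of n a and n b.
    By [HdomD] every small x has a lift y, and x |-> y is additive while the
    sums stay small. *)
Definition lift (n : Z) (x y : R) : Prop :=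
  congZ x (IZR n * a) /\ Rabs x < D /\ congZ y (IZR n * b) /\ Rabs y < 1/8.

Lemma lift_exists n x : congZ x (IZR n * a) -> Rabs x < D -> exists y, lift n x y.
Proof.
  intros Hz Hx. destruct (HdomD n (near_int_of_congZ _ _ _ Hz Hx)) as [w Hw].
  exists (IZR n * b - IZR w). repeat split; auto. exists (- w)%Z. rewrite opp_IZR; ring.
Qed.

Lemma lift_unique n x y y' : lift n x y -> lift n x y' -> y = y'.
Proof.
  intros (_ & _ & H1 & H2) (_ & _ & H3 & H4). apply congZ_small_eq; try lra.
  apply congZ_trans with (IZR n * b); auto using congZ_sym.
Qed.

Lemma lift_add n x y m x' y' : lift n x y -> lift m x' y' -> Rabs (x + x') < D ->
  lift (n + m) (x + x') (y + y').
Proof.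
  intros (H1 & H2 & H3 & H4) (H1' & H2' & H3' & H4') Hs.
  assert (Zb : congZ (y + y') (IZR (n + m) * b)).
  { rewrite plus_IZR, Rmult_plus_distr_r. apply congZ_add; auto. }
  assert (Za : congZ (x + x') (IZR (n + m) * a)).
  { rewrite plus_IZR, Rmult_plus_distr_r. apply congZ_add; auto. }
  destruct (lift_exists _ _ Za Hs) as [y'' Hy''].
  (* y + y' and y'' are congruent and both smaller than 1/4 *)
  replace (y + y') with y''; [exact Hy''|].
  destruct Hy'' as (_ & _ & Hc & Hb). apply Rabs_def2 in H4, H4'.
  apply congZ_small_eq; [| lra | apply Rabs_def1; lra].
  apply congZ_trans with (IZR (n + m) * b); auto using congZ_sym.
Qed.

Lemma lift_opp n x y : lift n x y -> lift (- n) (- x) (- y).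
Proof.
  intros (H1 & H2 & H3 & H4). unfold lift. rewrite opp_IZR, !Rabs_Ropp.
  rewrite !Ropp_mult_distr_l_reverse. repeat split; auto using congZ_opp.
Qed.

Lemma lift_nat_mul m t u : lift m t u -> 0 <= t -> forall j : nat, INR j * t < D ->
  lift (Z.of_nat j * m) (INR j * t) (INR j * u).
Proof.
  intros Hg Ht j. induction j as [|j IH]; intros Hj.
  - simpl. repeat split; try (rewrite Rmult_0_l, Rabs_R0; lra); exists 0%Z; simpl; ring.
  - rewrite S_INR in Hj |- *. pose proof (pos_INR j).
    assert (G := lift_add _ _ _ _ _ _ (IH ltac:(nra)) Hg
                   ltac:(rewrite Rabs_pos_eq by nra; nra)).
    replace (Z.of_nat (S j) * m)%Z with (Z.of_nat j * m + m)%Z by lia.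
    rewrite !Rmult_plus_distr_r, !Rmult_1_l. exact G.
Qed.

Lemma lift_divide m t u n x y : lift m t u -> 0 < t -> t < D / 2 ->
  lift n x y -> 0 <= x < D / 2 ->
  exists (j : nat) e ye, 0 <= e < t /\ x = INR j * t + e /\
    lift (n - Z.of_nat j * m) e ye /\ y = INR j * u + ye /\ Rabs (INR j * u) < 1/8.
Proof.
  intros Hm Ht Ht2 Hn Hx. destruct (floor_multiple x t Ht) as [q Bq].
  assert (Hq : (0 <= q)%Z) by (cut (-1 < q)%Z; [lia|]; apply lt_IZR; simpl; nra).
  set (j := Z.to_nat q).
  assert (Hj : INR j = IZR q) by (unfold j; rewrite INR_IZR_INZ, Z2Nat.id by lia; reflexivity).
  rewrite <- Hj in Bq.
  assert (Gj := lift_nat_mul m t u Hm ltac:(lra) j ltac:(lra)).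
  set (e := x - INR j * t).
  assert (Ze : congZ e (IZR (n - Z.of_nat j * m) * a)).
  { unfold e. rewrite minus_IZR, Rmult_minus_distr_r.
    apply congZ_add; [apply Hn | apply congZ_opp, Gj]. }
  destruct (lift_exists _ _ Ze ltac:(unfold e; rewrite Rabs_pos_eq; lra)) as [ye Hye].
  assert (G := lift_add _ _ _ _ _ _ Gj Hye ltac:(unfold e; rewrite Rabs_pos_eq; lra)).
  replace (Z.of_nat j * m + (n - Z.of_nat j * m))%Z with n in G by ring.
  replace (INR j * t + e) with x in G by (unfold e; ring).
  exists j, e, ye. split; [unfold e; lra|]. split; [unfold e; ring|]. split; auto.
  split; [apply (lift_unique n x); auto | apply Gj].
Qed.

Section Reference.
(** A reference lift with small positive x0; we show y = (y0 / x0) x. *)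
Variables (m0 : Z) (x0 y0 : R).
Hypothesis Href : lift m0 x0 y0.
Hypothesis Hx0 : 0 < x0 < D / 2.

(** Linearity: divide x and x0 by a tiny step t = m a; the quotients
    contribute exactly proportional parts and the remainders, which are
    smaller than t, have lifts smaller than any given eps by [Hctrl]. *)
Lemma lift_linear_pos n x y : lift n x y -> 0 <= x < D / 2 -> y * x0 = y0 * x.
Proof.
  intros Hn Hx. apply Rminus_diag_uniq, Rabs_arbitrarily_small. intros eps Heps Heps8.
  destruct (Hctrl eps Heps) as [d1 [Hd1 Hd1']].
  set (eta := Rmin (Rmin d1 eps) (D / 2)).
  assert (Heta : 0 < eta) by (apply Rmin_pos; [apply Rmin_pos |]; lra).
  assert (E1 : eta <= d1) by (unfold eta; eapply Rle_trans; [apply Rmin_l | apply Rmin_l]).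
  assert (E2 : eta <= eps) by (unfold eta; eapply Rle_trans; [apply Rmin_l | apply Rmin_r]).
  assert (E3 : eta <= D / 2) by apply Rmin_r.
  destruct (small_positive_multiple a Ha eta Heta) as [m [z [Ht1 Ht2]]].
  set (t := IZR m * a - IZR z) in *.
  assert (Zt : congZ t (IZR m * a)) by (exists (- z)%Z; rewrite opp_IZR; unfold t; ring).
  destruct (lift_exists m t Zt ltac:(rewrite Rabs_pos_eq; lra)) as [u Hu].
  assert (Remainder : forall k e ye, 0 <= e < t -> lift k e ye -> Rabs ye < eps).
  { intros k e ye He (Z1 & _ & Z2 & Hye).
    destruct (Hd1' k (near_int_of_congZ e _ d1 Z1 ltac:(rewrite Rabs_pos_eq; lra)))
      as [w Hw].
    replace ye with (IZR k * b - IZR w); auto. apply congZ_small_eq; try lra.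
    apply congZ_trans with (IZR k * b); [exists (- w)%Z; rewrite opp_IZR; ring | apply congZ_sym, Z2]. }
  destruct (lift_divide m t u n x y Hu Ht1 ltac:(lra) Hn Hx)
    as (j & e & ye & He & Ex & Ge & Ey & Hju).
  destruct (lift_divide m t u m0 x0 y0 Hu Ht1 ltac:(lra) Href ltac:(lra))
    as (j0 & e0 & ye0 & He0 & Ex0 & Ge0 & Ey0 & Hju0).
  pose proof (Remainder _ _ _ He Ge) as S1. pose proof (Remainder _ _ _ He0 Ge0) as S2.
  assert (Alg : y * x0 - y0 * x = (INR j * u) * e0 + ye * x0 - (INR j0 * u) * e - ye0 * x)
    by (rewrite Ey, Ey0, Ex, Ex0; ring).
  rewrite Alg. eapply Rle_lt_trans; [apply Rabs_sum4_le|].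
  assert (Rabs ((INR j * u) * e0) <= 1/8 * eps)
    by (apply Rabs_mult_le; [lra | rewrite Rabs_pos_eq; lra]).
  assert (Rabs (ye * x0) <= eps * (1/4))
    by (apply Rabs_mult_le; [lra | rewrite Rabs_pos_eq; lra]).
  assert (Rabs ((INR j0 * u) * e) <= 1/8 * eps)
    by (apply Rabs_mult_le; [lra | rewrite Rabs_pos_eq; lra]).
  assert (Rabs (ye0 * x) <= eps * (1/4))
    by (apply Rabs_mult_le; [lra | rewrite Rabs_pos_eq; lra]).
  lra.
Qed.

Lemma lift_linear n x y : lift n x y -> Rabs x < D / 2 -> y * x0 = y0 * x.
Proof.
  intros Hn Hx. destruct (Rle_lt_dec 0 x).
  - apply (lift_linear_pos n); auto. rewrite Rabs_pos_eq in Hx; lra.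
  - rewrite Rabs_left in Hx by lra.
    assert (E := lift_linear_pos _ _ _ (lift_opp _ _ _ Hn) ltac:(lra)). lra.
Qed.

(** The slope is an integer: pick x close to 1/L; the lifts of x and of
    r = L x - 1 satisfy L y - yr = slope * (L x - r) = slope, while L y and
    yr both represent (L m) b, so their difference is an integer. *)
Lemma lift_integer_slope : exists K : Z, y0 = IZR K * x0.
Proof.
  destruct (archimed_cor1 (D / 4) ltac:(lra)) as [L [HL HL0]].
  assert (HLpos : 1 <= INR L) by (apply (le_INR 1); lia).
  assert (HLinv : INR L * / INR L = 1) by (field; lra).
  set (eta := D / (4 * INR L)).
  assert (HLeta : INR L * eta = D / 4) by (unfold eta; field; lra).
  assert (Heta : 0 < eta) by (unfold eta; apply Rdiv_lt_0_compat; lra).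
  destruct (approx_by_multiples a Ha (/ INR L) eta Heta) as [m [z Hmz]].
  set (x := IZR m * a - IZR z) in *. apply Rabs_def2 in Hmz.
  assert (Hx : 0 < x < D / 2) by (split; nra).
  assert (Zx : congZ x (IZR m * a)) by (exists (- z)%Z; rewrite opp_IZR; unfold x; ring).
  destruct (lift_exists m x Zx ltac:(rewrite Rabs_pos_eq; lra)) as [y Hy].
  set (r := INR L * x - 1).
  assert (Hr : Rabs r < D / 2).
  { unfold r. replace (INR L * x - 1) with (INR L * (x - / INR L)) by (field; lra).
    apply Rabs_def1; nra. }
  assert (Zr : congZ r (IZR (Z.of_nat L * m) * a)).
  { exists (- (Z.of_nat L * z) - 1)%Z. unfold r, x.
    rewrite minus_IZR, opp_IZR, !mult_IZR, <- INR_IZR_INZ. simpl. ring. }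
  destruct (lift_exists _ r Zr ltac:(lra)) as [yr Hyr].
  pose proof (lift_linear _ _ _ Hy ltac:(rewrite Rabs_pos_eq; lra)) as E1.
  pose proof (lift_linear _ _ _ Hyr Hr) as E2.
  assert (Zy : congZ (INR L * y) yr).
  { apply congZ_trans with (IZR (Z.of_nat L * m) * b).
    - rewrite mult_IZR, <- INR_IZR_INZ, Rmult_assoc, INR_IZR_INZ. apply congZ_mulZ, Hy.
    - apply congZ_sym, Hyr. }
  destruct Zy as [K HK]. exists K. rewrite <- HK. unfold r in E2. nra.
Qed.
End Reference.

Lemma lift_multiplier : exists K : Z,
  forall n : Z, near_int (IZR n * a) (D / 2) -> congZ (IZR n * b) (IZR K * (IZR n * a)).
Proof.
  destruct (small_positive_multiple a Ha (D / 2) ltac:(lra)) as [m0 [z0 [H1 H2]]].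
  set (x0 := IZR m0 * a - IZR z0) in *.
  assert (Zx0 : congZ x0 (IZR m0 * a)) by (exists (- z0)%Z; rewrite opp_IZR; unfold x0; ring).
  destruct (lift_exists m0 x0 Zx0 ltac:(rewrite Rabs_pos_eq; lra)) as [y0 Hy0].
  destruct (lift_integer_slope m0 x0 y0 Hy0 ltac:(lra)) as [K HK].
  exists K. intros n [w Hw]. set (x := IZR n * a - IZR w) in *.
  assert (Zx : congZ x (IZR n * a)) by (exists (- w)%Z; rewrite opp_IZR; unfold x; ring).
  destruct (lift_exists n x Zx ltac:(lra)) as [y Hy].
  pose proof (lift_linear m0 x0 y0 Hy0 ltac:(lra) n x y Hy Hw) as E.
  assert (Ey : y = IZR K * x) by (rewrite HK in E; apply Rmult_eq_reg_r with x0; lra).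
  apply congZ_trans with y; [apply congZ_sym, Hy|]. rewrite Ey.
  apply congZ_mulZ, Zx.
Qed.
End LocalLift.

Lemma controlled_is_multiple a b : irrational a -> mult_controlled a b ->
  exists K : Z, congZ b (IZR K * a).
Proof.
  intros Ha Hctrl. destruct (Hctrl (1/8) ltac:(lra)) as [d [Hd Hd']].
  set (D := Rmin d (1/4)).
  assert (HD : 0 < D <= 1/4) by (split; [apply Rmin_pos | apply Rmin_r]; lra).
  destruct (lift_multiplier a b D Ha Hctrl HD) as [K HK].
  { intros n Hn. apply Hd'. eapply near_int_mono; [apply Rmin_l | exact Hn]. }
  exists K. apply (congZ_of_small_multiples a b K (D / 2)); auto. lra.
Qed.

Lemma order_exists g n : (0 < n)%nat -> circle_nmul n g = circle_zero ->
  exists m, circle_order g m.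
Proof.
  induction n as [n IH] using lt_wf_ind. intros Hn Hz.
  destruct (classic (exists m, (0 < m < n)%nat /\ circle_nmul m g = circle_zero))
    as [[m [Hm Hmz]] | Hno].
  - apply (IH m); lia || auto.
  - exists n. split; auto. split; auto. intros m Hm E. apply Hno. exists m; auto.
Qed.

Lemma order_of_same_annihilators g1 g2 n :
  (forall k, circle_nmul k g1 = circle_zero <-> circle_nmul k g2 = circle_zero) ->
  circle_order g1 n -> circle_order g2 n.
Proof.
  intros Ann [Hn [Hz Hmin]]. split; auto. split; [apply Ann; auto|].
  intros m Hm E. apply (Hmin m Hm), Ann, E.
Qed.

Lemma irrational_of_infinite_order g :
  (forall n, (0 < n)%nat -> circle_nmul n g <> circle_zero) -> irrational (proj1_sig g).
Proof.
  intros Hg m Hm z E. apply (Hg (Z.abs_nat m)); [lia|].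
  rewrite <- (proj_val g). apply nmul_zero_iff.
  rewrite INR_IZR_INZ, Nat2Z.inj_abs_nat.
  destruct (Z_le_gt_dec 0 m).
  - rewrite Z.abs_eq by lia. exists z. rewrite E; ring.
  - rewrite Z.abs_neq by lia. exists (- z)%Z. rewrite opp_IZR, opp_IZR, <- E; ring.
Qed.

Lemma mult_controlled_of_nat a b : (forall e, e > 0 -> exists d, d > 0 /\
    forall n : nat, near_int (INR n * a) d -> near_int (INR n * b) e) ->
  mult_controlled a b.
Proof.
  intros H e He. destruct (H e He) as [d [Hd Hn]]. exists d. split; auto.
  intros n Hnear. destruct (Z_le_gt_dec 0 n).
  - specialize (Hn (Z.to_nat n)). rewrite INR_IZR_INZ, Z2Nat.id in Hn by lia. auto.
  - specialize (Hn (Z.to_nat (- n))). rewrite INR_IZR_INZ, Z2Nat.id, opp_IZR in Hn by lia.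
    replace (IZR n * b) with (- (- IZR n * b)) by ring. apply near_int_opp, Hn.
    replace (- IZR n * a) with (- (IZR n * a)) by ring. apply near_int_opp; auto.
Qed.

(** Elements of infinite order that are conjugate in H satisfy g1 = ± g2:
    b = K a and a = L b in T with a irrational force L K = 1. *)
Lemma conjugated_infinite_order (H : TopGroup) (i : circle -> H) (t : H) g1 g2 :
  top_embedding circle_add circle_open H i -> conj H t (i g1) = i g2 ->
  (forall n, (0 < n)%nat -> circle_nmul n g1 <> circle_zero) ->
  g1 = g2 \/ g1 = circle_opp g2.
Proof.
  intros Hi Et Inf1.
  assert (Et' : conj H (tg_inv H t) (i g2) = i g1) by (rewrite <- Et; apply conj_inv).
  assert (Inf2 : forall n, (0 < n)%nat -> circle_nmul n g2 <> circle_zero).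
  { intros n Hn E. apply (Inf1 n Hn), (conj_annihilators H i Hi t g1 g2 Et), E. }
  pose proof (irrational_of_infinite_order g1 Inf1) as Ha.
  pose proof (irrational_of_infinite_order g2 Inf2) as Hb.
  destruct (controlled_is_multiple _ _ Ha
              (mult_controlled_of_nat _ _ (conj_small_multiples H i Hi t g1 g2 Et)))
    as [K HK].
  destruct (controlled_is_multiple _ _ Hb
              (mult_controlled_of_nat _ _ (conj_small_multiples H i Hi _ g2 g1 Et')))
    as [L HL].
  set (a := proj1_sig g1) in *. set (b := proj1_sig g2) in *.
  assert (EK : (L * K = 1)%Z).
  { destruct (congZ_trans _ _ _ HL (congZ_mulZ L _ _ HK)) as [z Hz].
    apply NNPP; intros E. apply (Ha (1 - L * K)%Z ltac:(lia) z).
    rewrite minus_IZR, mult_IZR, <- Hz. ring. }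
  rewrite <- (proj_val g1), <- (proj_val g2). fold a b.
  destruct (Z.eq_mul_1 _ _ (eq_trans (Z.mul_comm K L) EK)) as [E | E];
    rewrite E in HK; [left | right; rewrite opp_proj]; apply proj_eq.
  - apply congZ_sym. replace a with (IZR 1 * a) by (simpl; ring). exact HK.
  - replace a with (- (IZR (-1) * a)) by (simpl; ring). apply congZ_opp, congZ_sym, HK.
Qed.

Theorem mainTheorem17 (g1 g2 : circle) :
  induced_conjugated circle_add circle_open g1 g2 <->
  ((exists n : nat, circle_order g1 n /\ circle_order g2 n) \/
   (g1 = g2 \/ g1 = circle_opp g2)).
Proof.
  split; [| apply sufficiency].
  intros [H [i [Hi [t Et]]]]. change (conj H t (i g1) = i g2) in Et.
  destruct (classic (exists n, circle_order g1 n)) as [[n Hn] | Hinf].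
  - (* finite order: conjugation preserves the annihilating integers *)
    left. exists n. split; auto.
    apply (order_of_same_annihilators g1); auto. apply (conj_annihilators H i Hi t); auto.
  - right. apply (conjugated_infinite_order H i t); auto.
    intros n Hn E. apply Hinf, (order_exists g1 n); auto.
Qed.
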